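(* Let $X,Y$ be random variables with $P(X=k)=p_k\ge0$ and $P(Y=k)=q_k\ge0$ for $k=0,1,2,\dots$, with $q_k>0$ so that the ratios $p_k/q_k$ are defined. Let $L_X(x)=\sum_{k=0}^\infty p_ke^{-kx}$ and $L_Y(x)=\sum_{k=0}^\infty q_ke^{-kx}$ $(x>0)$. If one of the conditions (i) the sequence $\{p_k/q_k\}$ is increasing (resp. decreasing) for all $k\ge0$; (ii) there exists an integer $m\ge1$ such that $\{p_k/q_k\}$ is increasing (resp. decreasing) for $0\le k\le m$ and decreasing (resp. increasing) for $k\ge m$, and $H_{L_X,L_Y}(0^+)\ge0$ (resp. $\le0$); holds, then $Y\le_{Lt-r}X$ (resp. $X\le_{Lt-r}Y$).
   Context: For a random variable $Z\ge0$ with distribution function $F_Z$, its Laplace–Stieltjes transform is $L_Z(x)=\int_0^\infty e^{-tx}\,dF_Z(t)$, $x>0$. For random variables $X,Y\ge0$, $X\le_{Lt-r}Y$ (Laplace transform ratio order) means that $x\mapsto L_Y(x)/L_X(x)$ is decreasing on $(0,\infty)$. $H_{F,G}=\frac{F'}{G'}G-F$ and $H_{F,G}(0^+)=\lim_{x\to0^+}H_{F,G}(x)$. *)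

From Stdlib Require Import Reals.
From Coquelicot Require Import Coquelicot.
Open Scope R_scope.

Definition LT (p : nat -> R) (x : R) : R :=
  Series (fun k => p k * exp (- (INR k * x))).

Definition decreasing_pos (f : R -> R) : Prop :=
  forall x y, 0 < x -> x <= y -> f y <= f x.

(* Laplace transform ratio order: X <=_{Lt-r} Y iff L_Y / L_X decreasing on (0,oo). *)
Definition Ltr_le (p q : nat -> R) : Prop :=
  decreasing_pos (fun x => LT q x / LT p x).

Definition H_fun (F G : R -> R) (x : R) : R :=
  Derive F x / Derive G x * G x - F x.

Definition incr_on (a : nat -> R) (P : nat -> Prop) : Prop :=
  forall i j, P i -> P j -> (i <= j)%nat -> a i <= a j.
Definition decr_on (a : nat -> R) (P : nat -> Prop) : Prop :=
  forall i j, P i -> P j -> (i <= j)%nat -> a j <= a i.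

Definition pmf (p : nat -> R) : Prop :=
  (forall k, 0 <= p k) /\ is_series p 1.

(* Substituting t = exp (-x) turns L_X and L_Y into the power series A(t) = sum p_k t^k and
   B(t) = sum q_k t^k on (0, 1), and Y <=_{Lt-r} X into the monotonicity of A / B in t.
   For a level c the coefficients of A - c B are q_k (p_k / q_k - c).  If p_k / q_k increases,
   they change sign at most once, from - to +, and then E(t) / t^K is nondecreasing for the
   index K of the sign change; with c = (A/B)(v) this gives (A/B)(u) <= (A/B)(v) for u <= v.
   If p_k / q_k is unimodal, the sign pattern is at most (-, +, -), which forbids a strict
   interior local minimum of A / B; the same holds for A' / B', whose coefficient ratios
   p_(k+1) / q_(k+1) are again unimodal.  As H = (A'/B') B - A satisfies H' = (A'/B')' B, H is
   quasi-concave on [0, 1).  It is nonnegative at 0 because p_0 / q_0 <= p_1 / q_1, and near 1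
   by the hypothesis on H(0+), hence on all of (0, 1), so (A/B)' = H B' / B^2 >= 0.
   The decreasing statements follow by applying this to -p. *)

From Stdlib Require Import Reals Lra Lia Arith Classical.
From Coquelicot Require Import Coquelicot.
Open Scope R_scope.

Lemma ex_least_index (P : nat -> Prop) :
  (exists n, P n) -> exists k, P k /\ forall j, (j < k)%nat -> ~ P j.
Proof.
  intros HP.
  destruct (Wf_nat.dec_inh_nat_subset_has_unique_least_element P
              (fun n => classic (P n)) HP) as [k [[Pk Hleast] _]].
  exists k; split; [exact Pk|].
  intros j Hj Pj; specialize (Hleast j Pj); lia.
Qed.

(** * Quasi-concave real functions *)

Lemma nondecr_of_is_derive (f f' : R -> R) (x y : R) : x <= y ->
  (forall c, x <= c <= y -> is_derive f c (f' c)) ->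
  (forall c, x < c < y -> 0 <= f' c) -> f x <= f y.
Proof.
  intros Hxy Hd Hpos.
  destruct (Req_dec x y) as [<-|Hne]; [lra|].
  destruct (MVT_cor2 f f' x y) as [c [Hc Hcxy]]; [lra| |].
  - intros c Hc; apply is_derive_Reals, Hd, Hc.
  - specialize (Hpos c Hcxy); nra.
Qed.

Lemma nonincr_of_is_derive (f f' : R -> R) (x y : R) : x <= y ->
  (forall c, x <= c <= y -> is_derive f c (f' c)) ->
  (forall c, x < c < y -> f' c <= 0) -> f y <= f x.
Proof.
  intros Hxy Hd Hneg.
  enough (- f x <= - f y) by lra.
  apply (nondecr_of_is_derive (fun t => - f t) (fun t => - f' t)); [exact Hxy| |].
  - intros c Hc; exact (is_derive_opp f c (f' c) (Hd c Hc)).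
  - intros c Hc; specialize (Hneg c Hc); lra.
Qed.

Definition qconcave_on (I : R -> Prop) (f : R -> R) : Prop :=
  forall x y z, I x -> I z -> x < y < z -> f x <= f y \/ f z <= f y.

Definition qconcave_seq (r : nat -> R) : Prop :=
  forall i j k, (i <= j <= k)%nat -> r i <= r j \/ r k <= r j.

Lemma qconcave_seq_unimodal (r : nat -> R) (m : nat) :
  incr_on r (fun k => (k <= m)%nat) -> decr_on r (fun k => (m <= k)%nat) ->
  qconcave_seq r.
Proof.
  intros Hinc Hdec i j k Hijk.
  destruct (Nat.le_gt_cases j m).
  - left; apply Hinc; lia.
  - right; apply Hdec; lia.
Qed.

Lemma qconcave_of_derive (f f' : R -> R) (lo hi : R) :
  (forall c, lo <= c < hi -> is_derive f c (f' c)) ->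
  (forall s w, lo < s < w -> w < hi -> f' s < 0 -> f' w <= 0) ->
  qconcave_on (fun t => lo <= t < hi) f.
Proof.
  intros Hd Hsign x y z Hx Hz Hxyz.
  destruct (classic (exists s, x < s < y /\ f' s < 0)) as [[s [Hs Hs']]|Hno].
  - right; apply (nonincr_of_is_derive f f'); [lra|intros c Hc; apply Hd; lra|].
    intros c Hc; apply (Hsign s c); lra.
  - left; apply (nondecr_of_is_derive f f'); [lra|intros c Hc; apply Hd; lra|].
    intros c Hc; apply Rnot_lt_le; intros Hneg; apply Hno; exists c; split; [lra|exact Hneg].
Qed.

Lemma is_derive_quotient_sign (f : R -> R) (x l : R) : is_derive f x l -> l <> 0 ->
  exists d : posreal, forall h, h <> 0 -> Rabs h < d -> 0 < l * ((f (x + h) - f x) / h).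
Proof.
  intros Hd Hl; apply is_derive_Reals in Hd.
  destruct (Hd (Rabs l) (Rabs_pos_lt l Hl)) as [d Hd'].
  exists d; intros h Hh0 Hh.
  specialize (Hd' h Hh0 Hh).
  set (q := (f (x + h) - f x) / h) in *.
  destruct (Rcase_abs l); [rewrite (Rabs_left l) in Hd' by lra|rewrite (Rabs_right l) in Hd' by lra];
    apply Rabs_lt_between in Hd'; nra.
Qed.

Lemma exists_lt_right_of_derive_neg (f : R -> R) (x l y : R) :
  is_derive f x l -> l < 0 -> x < y -> exists z, x < z < y /\ f z < f x.
Proof.
  intros Hd Hl Hxy.
  destruct (is_derive_quotient_sign f x l Hd ltac:(lra)) as [d Hq].
  set (h := Rmin (d / 2) ((y - x) / 2)).
  assert (0 < h) by (apply Rmin_pos; pose proof (cond_pos d); lra).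
  assert (h <= d / 2) by apply Rmin_l.
  assert (h <= (y - x) / 2) by apply Rmin_r.
  specialize (Hq h ltac:(lra) ltac:(pose proof (cond_pos d); rewrite Rabs_pos_eq; lra)).
  exists (x + h); split; [lra|].
  assert ((f (x + h) - f x) / h < 0) by nra.
  assert (f (x + h) - f x < 0); [|lra].
  replace (f (x + h) - f x) with ((f (x + h) - f x) / h * h) by (field; lra); nra.
Qed.

Lemma exists_lt_left_of_derive_pos (f : R -> R) (x l y : R) :
  is_derive f x l -> 0 < l -> y < x -> exists z, y < z < x /\ f z < f x.
Proof.
  intros Hd Hl Hyx.
  destruct (is_derive_quotient_sign f x l Hd ltac:(lra)) as [d Hq].
  set (h := Rmin (d / 2) ((x - y) / 2)).
  assert (0 < h) by (apply Rmin_pos; pose proof (cond_pos d); lra).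
  assert (h <= d / 2) by apply Rmin_l.
  assert (h <= (x - y) / 2) by apply Rmin_r.
  specialize (Hq (- h) ltac:(lra)
    ltac:(pose proof (cond_pos d); rewrite Rabs_Ropp, Rabs_pos_eq; lra)).
  exists (x + - h); split; [lra|].
  assert (0 < (f (x + - h) - f x) / - h) by nra.
  assert (f (x + - h) - f x < 0); [|lra].
  replace (f (x + - h) - f x) with (- ((f (x + - h) - f x) / - h * h)) by (field; lra); nra.
Qed.

Lemma derive_nonpos_of_qconcave (g g' : R -> R) (s w : R) : s < w ->
  is_derive g s (g' s) -> is_derive g w (g' w) ->
  qconcave_on (fun t => s <= t <= w) g -> g' s < 0 -> g' w <= 0.
Proof.
  intros Hsw Hds Hdw Hq Hs; apply Rnot_lt_le; intros Hw.
  destruct (exists_lt_right_of_derive_neg g s (g' s) w Hds Hs Hsw) as [z1 [Hz1 Hgz1]].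
  destruct (exists_lt_left_of_derive_pos g w (g' w) z1 Hdw Hw ltac:(lra)) as [z2 [Hz2 Hgz2]].
  destruct (Hq s z1 w) as [Hq1|Hq1]; try lra.
  destruct (Hq s z2 w) as [Hq2|Hq2]; lra.
Qed.

Lemma nonneg_of_qconcave (h : R -> R) (lo hi : R) :
  qconcave_on (fun t => lo <= t < hi) h -> 0 <= h lo ->
  (forall eps, 0 < eps -> at_left hi (fun t => - eps < h t)) ->
  forall t, lo < t < hi -> 0 <= h t.
Proof.
  intros Hq Hlo Hhi t Ht; apply Rnot_lt_le; intros Hneg.
  destruct (Hhi (- h t) ltac:(lra)) as [d Hd].
  set (y := Rmax ((t + hi) / 2) (hi - d / 2)).
  assert ((t + hi) / 2 <= y) by apply Rmax_l.
  assert (hi - d / 2 <= y) by apply Rmax_r.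
  assert (y < hi) by (apply Rmax_lub_lt; pose proof (cond_pos d); lra).
  assert (h t < h y).
  { enough (- - h t < h y) by lra.
    apply Hd; [|lra].
    apply Rabs_lt_between; pose proof (cond_pos d); split; unfold minus, plus, opp; simpl; lra. }
  destruct (Hq lo t y) as [Hty|Hty]; lra.
Qed.

(** * Power series on the unit interval *)

Lemma CV_radius_ge_1 (a : nat -> R) :
  (forall t, 0 <= t < 1 -> ex_pseries a t) -> Rbar_le 1 (CV_radius a).
Proof.
  intros Hex.
  destruct (Rbar_le_dec 1 (CV_radius a)) as [Hr|Hr]; [exact Hr|exfalso].
  apply Rbar_not_le_lt in Hr.
  pose proof (CV_radius_ge_0 a) as Hr0.
  destruct (CV_radius a) as [r| |] eqn:Er; simpl in Hr, Hr0; try tauto.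
  apply (CV_disk_outside a ((r + 1) / 2)).
  - rewrite Er, Rabs_pos_eq; simpl; lra.
  - apply ex_series_lim_0, ex_pseries_R, Hex; lra.
Qed.

Section UnitRadius.

Variable a : nat -> R.
Hypothesis Ha : Rbar_le 1 (CV_radius a).

Lemma Rabs_lt_CV_radius t : 0 <= t < 1 -> Rbar_lt (Rabs t) (CV_radius a).
Proof.
  intros Ht; apply Rbar_lt_le_trans with 1; [|exact Ha].
  rewrite Rabs_pos_eq; simpl; lra.
Qed.

Lemma ex_pseries_unit t : 0 <= t < 1 -> ex_pseries a t.
Proof. intros Ht; apply CV_radius_inside, Rabs_lt_CV_radius, Ht. Qed.

Lemma is_derive_PSeries_unit t : 0 <= t < 1 ->
  is_derive (PSeries a) t (PSeries (PS_derive a) t).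
Proof. intros Ht; apply is_derive_PSeries, Rabs_lt_CV_radius, Ht. Qed.

Lemma CV_radius_derive_ge_1 : Rbar_le 1 (CV_radius (PS_derive a)).
Proof. rewrite CV_radius_derive; exact Ha. Qed.

End UnitRadius.

Lemma Series_ge_0 (s : nat -> R) : (forall n, 0 <= s n) -> ex_series s -> 0 <= Series s.
Proof.
  intros Hs Hex.
  replace 0 with (Series (fun n => 0 * s n)) by (rewrite Series_scal_l; ring).
  apply Series_le; [|exact Hex].
  intros n; rewrite Rmult_0_l; split; [lra|apply Hs].
Qed.

Lemma PSeries_ge_0 (c : nat -> R) (t : R) :
  (forall n, 0 <= c n) -> 0 <= t -> ex_pseries c t -> 0 <= PSeries c t.
Proof.
  intros Hc Ht Hex; apply Series_ge_0; [|apply ex_pseries_R, Hex].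
  intros n; apply Rmult_le_pos; [apply Hc|apply pow_le, Ht].
Qed.

Lemma PSeries_le_0 (c : nat -> R) (t : R) :
  (forall n, c n <= 0) -> 0 <= t -> ex_pseries c t -> PSeries c t <= 0.
Proof.
  intros Hc Ht Hex.
  enough (Hopp : 0 <= PSeries (PS_opp c) t) by (rewrite PSeries_opp in Hopp; lra).
  apply PSeries_ge_0; [|exact Ht|apply ex_pseries_opp, Hex].
  intros n; specialize (Hc n); unfold PS_opp, opp; simpl; lra.
Qed.

Lemma PSeries_gt_0 (c : nat -> R) (k : nat) (t : R) :
  (forall n, 0 <= c n) -> 0 < c k -> 0 < t -> ex_pseries c t -> 0 < PSeries c t.
Proof.
  intros Hc Hk Ht Hex.
  rewrite (PSeries_decr_n c k t Hex).
  assert (0 <= PSeries (PS_decr_n c (S k)) t).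
  { apply PSeries_ge_0; [intros n; apply Hc|lra|].
    apply ex_pseries_decr_n; [right; exists (/ t); apply Rinv_l; lra|exact Hex]. }
  assert (0 < t ^ S k) by (apply pow_lt, Ht).
  assert (0 < sum_f_R0 (fun n => c n * t ^ n) k).
  { assert (Hterm : forall n, 0 <= c n * t ^ n)
      by (intros n; apply Rmult_le_pos; [apply Hc|apply pow_le; lra]).
    assert (0 < c k * t ^ k) by (apply Rmult_lt_0_compat; [exact Hk|apply pow_lt, Ht]).
    destruct k as [|k]; simpl in *; [lra|].
    pose proof (cond_pos_sum _ k Hterm); lra. }
  nra.
Qed.

Lemma PSeries_pos (c : nat -> R) (t : R) :
  (forall n, 0 < c n) -> 0 <= t -> ex_pseries c t -> 0 < PSeries c t.
Proof.
  intros Hc Ht Hex.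
  destruct (Req_dec t 0) as [->|Ht0].
  - rewrite PSeries_0; apply Hc.
  - apply (PSeries_gt_0 c 0); [intros n; left; apply Hc|apply Hc|lra|exact Hex].
Qed.

(** * Sign changes of coefficients *)

Definition nonneg_after_pos (d : nat -> R) : Prop :=
  forall j k, (j <= k)%nat -> 0 < d j -> 0 <= d k.

Lemma pow_mul_pow_le (u v : R) (j k : nat) :
  0 < u <= v -> (j <= k)%nat -> v ^ j * u ^ k <= u ^ j * v ^ k.
Proof.
  intros Huv Hjk.
  replace k with (j + (k - j))%nat by lia; rewrite !pow_add.
  assert (0 <= u ^ j * v ^ j) by (apply Rmult_le_pos; apply pow_le; lra).
  assert (u ^ (k - j) <= v ^ (k - j)) by (apply pow_incr; lra).
  replace (v ^ j * (u ^ j * u ^ (k - j))) with (u ^ j * v ^ j * u ^ (k - j)) by ring.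
  replace (u ^ j * (v ^ j * v ^ (k - j))) with (u ^ j * v ^ j * v ^ (k - j)) by ring.
  apply Rmult_le_compat_l; assumption.
Qed.

Lemma PSeries_div_pow_nondecr (e : nat -> R) (K : nat) (u v : R) :
  (forall k, (k < K)%nat -> e k <= 0) -> (forall k, (K < k)%nat -> 0 <= e k) ->
  0 < u <= v -> ex_pseries e u -> ex_pseries e v ->
  v ^ K * PSeries e u <= u ^ K * PSeries e v.
Proof.
  intros Hlo Hhi Huv Eu Ev; apply ex_pseries_R in Eu, Ev.
  assert (Eu' : ex_series (fun n => v ^ K * (e n * u ^ n)))
    by (apply (ex_series_scal_l (V := R_NormedModule)), Eu).
  assert (Ev' : ex_series (fun n => u ^ K * (e n * v ^ n)))
    by (apply (ex_series_scal_l (V := R_NormedModule)), Ev).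
  assert (Hdiff : 0 <= Series (fun n => u ^ K * (e n * v ^ n) - v ^ K * (e n * u ^ n))).
  { apply Series_ge_0; [|apply (ex_series_minus (V := R_NormedModule)); assumption].
    intros n; destruct (lt_eq_lt_dec n K) as [[Hn|<-]|Hn].
    - pose proof (pow_mul_pow_le u v n K Huv ltac:(lia)).
      specialize (Hlo n Hn); nra.
    - lra.
    - pose proof (pow_mul_pow_le u v K n Huv ltac:(lia)).
      specialize (Hhi n Hn); nra. }
  unfold PSeries; rewrite Series_minus, !Series_scal_l in Hdiff by assumption; lra.
Qed.

Lemma PSeries_pos_stable (d : nat -> R) (u v : R) : nonneg_after_pos d ->
  0 < u <= v -> ex_pseries d u -> ex_pseries d v ->
  0 < PSeries d u -> 0 < PSeries d v.
Proof.
  intros Hd Huv Eu Ev Hu.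
  destruct (classic (exists j, 0 < d j)) as [Hpos|Hno].
  - destruct (ex_least_index _ Hpos) as [K [HK Hmin]].
    assert (v ^ K * PSeries d u <= u ^ K * PSeries d v).
    { apply PSeries_div_pow_nondecr; try assumption.
      - intros k Hk; apply Rnot_lt_le, Hmin, Hk.
      - intros k Hk; apply (Hd K k); [lia|exact HK]. }
    assert (0 < u ^ K) by (apply pow_lt; lra).
    assert (0 < v ^ K) by (apply pow_lt; lra).
    nra.
  - enough (PSeries d u <= 0) by lra.
    apply PSeries_le_0; [|lra|exact Eu].
    intros n; apply Rnot_lt_le; intros Hn; apply Hno; exists n; exact Hn.
Qed.

Definition PS_euler (K : nat) (e : nat -> R) : nat -> R :=
  PS_minus (PS_incr_1 (PS_derive e)) (PS_scal (INR K) e).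

Lemma PS_euler_coef (K : nat) (e : nat -> R) (n : nat) :
  PS_euler K e n = (INR n - INR K) * e n.
Proof.
  unfold PS_euler, PS_minus, PS_incr_1, PS_derive, PS_scal, PS_plus, PS_opp.
  destruct n as [|n]; unfold plus, opp, scal, zero; simpl; unfold mult; simpl; ring.
Qed.

Section EulerOperator.

Variable e : nat -> R.
Hypothesis He : Rbar_le 1 (CV_radius e).
Variable K : nat.

Lemma ex_pseries_euler t : 0 <= t < 1 -> ex_pseries (PS_euler K e) t.
Proof.
  intros Ht; apply ex_pseries_minus.
  - apply ex_pseries_incr_1, ex_pseries_unit; [apply CV_radius_derive_ge_1, He|exact Ht].
  - apply ex_pseries_scal; [apply Rmult_comm|apply ex_pseries_unit; assumption].
Qed.

Lemma PSeries_euler t : 0 <= t < 1 ->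
  PSeries (PS_euler K e) t = t * PSeries (PS_derive e) t - INR K * PSeries e t.
Proof.
  intros Ht; unfold PS_euler.
  rewrite PSeries_minus, PSeries_incr_1, PSeries_scal; [reflexivity| |].
  - apply ex_pseries_incr_1, ex_pseries_unit; [apply CV_radius_derive_ge_1, He|exact Ht].
  - apply ex_pseries_scal; [apply Rmult_comm|apply ex_pseries_unit; assumption].
Qed.

Lemma is_derive_PSeries_div_pow t : 0 < t < 1 ->
  is_derive (fun x => PSeries e x / x ^ K) t (PSeries (PS_euler K e) t / t ^ S K).
Proof.
  intros Ht.
  assert (Hpow : is_derive (fun x => x ^ K) t (INR K * 1 * t ^ pred K))
    by (apply (is_derive_pow (fun x => x)), (is_derive_id (K := R_AbsRing))).
  assert (t ^ K <> 0) by (apply pow_nonzero; lra).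
  pose proof (is_derive_div _ _ t _ _ (is_derive_PSeries_unit e He t ltac:(lra)) Hpow
                ltac:(assumption)) as Hd.
  replace (PSeries (PS_euler K e) t / t ^ S K) with
    ((PSeries (PS_derive e) t * t ^ K - PSeries e t * (INR K * 1 * t ^ pred K)) / (t ^ K) ^ 2);
    [exact Hd|].
  rewrite PSeries_euler by lra.
  destruct K as [|k]; simpl pred; [simpl; field; lra|].
  rewrite S_INR; simpl.
  assert (t ^ k <> 0) by (apply pow_nonzero; lra).
  field; split; [assumption|lra].
Qed.

(* [t^(K+1) (E / t^K)' = t E' - K E] has coefficients [(n - K) e_n], which turns the sign
   pattern (-, +, -) of [e] into (+, -); so [(E / t^K)'] changes sign at most once. *)
Lemma PSeries_div_pow_qconcave :
  (forall k, (k < K)%nat -> e k <= 0) ->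
  (forall j k, (K < j <= k)%nat -> e j < 0 -> e k <= 0) ->
  qconcave_on (fun t => 0 < t < 1) (fun t => PSeries e t / t ^ K).
Proof.
  intros Hlo Hhi x y z Hx Hz Hxyz.
  refine (qconcave_of_derive (fun t => PSeries e t / t ^ K)
            (fun t => PSeries (PS_euler K e) t / t ^ S K) x 1 _ _ x y z _ _ Hxyz);
    [| |lra|lra].
  - intros c Hc; apply is_derive_PSeries_div_pow; lra.
  - intros s w Hs Hw Hds.
    assert (0 < s ^ S K) by (apply pow_lt; lra).
    assert (0 < w ^ S K) by (apply pow_lt; lra).
    assert (Hw' : 0 < PSeries (PS_opp (PS_euler K e)) w).
    { apply (PSeries_pos_stable _ s); [|lra| | |].
      - intros j k Hjk; unfold PS_opp, opp; simpl; rewrite !PS_euler_coef.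
        intros Hj.
        destruct (Nat.le_gt_cases j K) as [HjK|HjK].
        + exfalso; destruct (proj1 (Nat.lt_eq_cases j K) HjK) as [HjK'|<-]; [|lra].
          specialize (Hlo j HjK'); apply lt_INR in HjK'; nra.
        + pose proof (lt_INR _ _ HjK); pose proof (le_INR _ _ Hjk).
          assert (e j < 0) by nra.
          specialize (Hhi j k ltac:(lia) ltac:(assumption)); nra.
      - apply ex_pseries_opp, ex_pseries_euler; lra.
      - apply ex_pseries_opp, ex_pseries_euler; lra.
      - rewrite PSeries_opp.
        enough (PSeries (PS_euler K e) s < 0) by lra.
        apply Rnot_le_lt; intros Hge.
        assert (0 <= PSeries (PS_euler K e) s / s ^ S K)
          by (apply Rmult_le_pos; [exact Hge|left; apply Rinv_0_lt_compat; assumption]).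
        lra. }
    rewrite PSeries_opp in Hw'.
    apply Rmult_le_0_r; [lra|left; apply Rinv_0_lt_compat; assumption].
Qed.

End EulerOperator.

(** * Ratios of power series *)

Definition PSeries_H (a b : nat -> R) (t : R) : R :=
  PSeries (PS_derive a) t / PSeries (PS_derive b) t * PSeries b t - PSeries a t.

Section PSeriesRatio.

Variables a b : nat -> R.
Hypothesis Ha : Rbar_le 1 (CV_radius a).
Hypothesis Hb : Rbar_le 1 (CV_radius b).
Hypothesis Hbpos : forall k, 0 < b k.

Let dev (c : R) : nat -> R := PS_minus a (PS_scal c b).

Lemma dev_coef c k : dev c k = b k * (a k / b k - c).
Proof.
  change (dev c k) with (a k - c * b k).
  pose proof (Hbpos k); field; lra.
Qed.

Lemma PSeries_unit_pos t : 0 <= t < 1 -> 0 < PSeries b t.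
Proof. intros Ht; apply PSeries_pos; [exact Hbpos|lra|apply ex_pseries_unit; assumption]. Qed.

Lemma ex_pseries_dev c t : 0 <= t < 1 -> ex_pseries (dev c) t.
Proof.
  intros Ht; apply ex_pseries_minus; [apply ex_pseries_unit; assumption|].
  apply ex_pseries_scal; [apply Rmult_comm|apply ex_pseries_unit; assumption].
Qed.

Lemma PSeries_dev c t : 0 <= t < 1 ->
  PSeries (dev c) t = PSeries b t * (PSeries a t / PSeries b t - c).
Proof.
  intros Ht; unfold dev.
  rewrite PSeries_minus, PSeries_scal;
    [| apply ex_pseries_unit; assumption
     | apply ex_pseries_scal; [apply Rmult_comm|apply ex_pseries_unit; assumption]].
  pose proof (PSeries_unit_pos t Ht); field; lra.
Qed.

Theorem PSeries_ratio_nondecr_of_incr :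
  incr_on (fun k => a k / b k) (fun _ => True) ->
  forall u v, 0 < u <= v -> v < 1 ->
  PSeries a u / PSeries b u <= PSeries a v / PSeries b v.
Proof.
  intros Hr u v Huv Hv; apply Rnot_lt_le; intros Hlt.
  set (c := PSeries a v / PSeries b v) in *.
  assert (Hsign : nonneg_after_pos (dev c)).
  { intros j k Hjk; rewrite !dev_coef; intros Hj.
    pose proof (Hbpos j); pose proof (Hbpos k).
    assert (c < a j / b j) by nra.
    specialize (Hr j k I I Hjk); nra. }
  pose proof (PSeries_unit_pos u ltac:(lra)); pose proof (PSeries_unit_pos v ltac:(lra)).
  assert (Hpos : 0 < PSeries (dev c) v).
  { apply (PSeries_pos_stable _ u); try assumption; try (apply ex_pseries_dev; lra).
    rewrite PSeries_dev by lra; nra. }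
  rewrite PSeries_dev in Hpos by lra; unfold c in Hpos; lra.
Qed.

Lemma PSeries_ratio_qconcave :
  qconcave_seq (fun k => a k / b k) ->
  qconcave_on (fun t => 0 < t < 1) (fun t => PSeries a t / PSeries b t).
Proof.
  intros Hr x y z Hx Hz Hxyz.
  destruct (Rle_lt_dec (PSeries a x / PSeries b x) (PSeries a y / PSeries b y)) as [|Hxy];
    [left; assumption|].
  destruct (Rle_lt_dec (PSeries a z / PSeries b z) (PSeries a y / PSeries b y)) as [|Hzy];
    [right; assumption|exfalso].
  set (c := PSeries a y / PSeries b y) in *.
  pose proof (PSeries_unit_pos x ltac:(lra)); pose proof (PSeries_unit_pos z ltac:(lra)).
  assert (Ex : 0 < PSeries (dev c) x) by (rewrite PSeries_dev by lra; nra).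
  assert (Ey : PSeries (dev c) y = 0) by (rewrite PSeries_dev by lra; unfold c; ring).
  assert (Ez : 0 < PSeries (dev c) z) by (rewrite PSeries_dev by lra; nra).
  destruct (classic (exists k, c <= a k / b k)) as [Hk|Hno].
  - destruct (ex_least_index _ Hk) as [K [HK Hmin]].
    assert (Hq : qconcave_on (fun t => 0 < t < 1) (fun t => PSeries (dev c) t / t ^ K)).
    { apply PSeries_div_pow_qconcave.
      - apply CV_radius_ge_1; intros t Ht; apply ex_pseries_dev, Ht.
      - intros k Hk'; rewrite dev_coef.
        pose proof (Rnot_le_lt _ _ (Hmin k Hk')); pose proof (Hbpos k); nra.
      - intros j k Hjk; rewrite !dev_coef; intros Hj.
        pose proof (Hbpos j); pose proof (Hbpos k).
        assert (a j / b j < c) by nra.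
        destruct (Hr K j k ltac:(lia)); nra. }
    assert (0 < PSeries (dev c) x / x ^ K) by (apply Rdiv_lt_0_compat; [|apply pow_lt]; lra).
    assert (0 < PSeries (dev c) z / z ^ K) by (apply Rdiv_lt_0_compat; [|apply pow_lt]; lra).
    destruct (Hq x y z Hx Hz Hxyz) as [Hle|Hle]; rewrite Ey, Rdiv_0_l in Hle; lra.
  - enough (PSeries (dev c) x <= 0) by lra.
    apply PSeries_le_0; [|lra|apply ex_pseries_dev; lra].
    intros k; rewrite dev_coef.
    assert (a k / b k < c) by (apply Rnot_le_lt; intros Hk; apply Hno; exists k; exact Hk).
    pose proof (Hbpos k); nra.
Qed.

Lemma PS_derive_pos k : 0 < PS_derive b k.
Proof. apply Rmult_lt_0_compat; [apply lt_0_INR; lia|apply Hbpos]. Qed.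

Lemma PS_derive_ratio k : PS_derive a k / PS_derive b k = a (S k) / b (S k).
Proof.
  unfold PS_derive; pose proof (Hbpos (S k)); pose proof (lt_0_INR (S k) ltac:(lia)).
  field; lra.
Qed.

Lemma is_derive_PSeries_ratio t : 0 <= t < 1 ->
  is_derive (fun s => PSeries a s / PSeries b s) t
    ((PSeries (PS_derive a) t * PSeries b t - PSeries a t * PSeries (PS_derive b) t)
     / PSeries b t ^ 2).
Proof.
  intros Ht; pose proof (PSeries_unit_pos t Ht).
  apply is_derive_div; [apply is_derive_PSeries_unit; assumption
                       |apply is_derive_PSeries_unit; assumption|lra].
Qed.

Lemma PSeries_derive_unit_pos t : 0 <= t < 1 -> 0 < PSeries (PS_derive b) t.
Proof.
  intros Ht; apply PSeries_pos; [exact PS_derive_pos|lra|].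
  apply ex_pseries_unit; [apply CV_radius_derive_ge_1, Hb|exact Ht].
Qed.

(* Since [A' = (A'/B') B'], the product rule for [(A'/B') B - A] cancels the term [A']. *)
Lemma is_derive_PSeries_H t D : 0 <= t < 1 ->
  is_derive (fun s => PSeries (PS_derive a) s / PSeries (PS_derive b) s) t D ->
  is_derive (PSeries_H a b) t (D * PSeries b t).
Proof.
  intros Ht HD; pose proof (PSeries_derive_unit_pos t Ht).
  replace (D * PSeries b t) with
    (D * PSeries b t + PSeries (PS_derive a) t / PSeries (PS_derive b) t * PSeries (PS_derive b) t
     - PSeries (PS_derive a) t) by (field; lra).
  apply (is_derive_minus (fun s => _ * PSeries b s)); [|apply is_derive_PSeries_unit; assumption].
  apply (is_derive_mult (fun s => PSeries (PS_derive a) s / PSeries (PS_derive b) s));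
    [exact HD|apply is_derive_PSeries_unit; assumption|intros; apply Rmult_comm].
Qed.

End PSeriesRatio.

Section UnimodalRatio.

Variables a b : nat -> R.
Hypothesis Ha : Rbar_le 1 (CV_radius a).
Hypothesis Hb : Rbar_le 1 (CV_radius b).
Hypothesis Hbpos : forall k, 0 < b k.
Variable m : nat.
Hypothesis Hinc : incr_on (fun k => a k / b k) (fun k => (k <= m)%nat).
Hypothesis Hdec : decr_on (fun k => a k / b k) (fun k => (m <= k)%nat).

Lemma PSeries_derive_ratio_qconcave :
  qconcave_on (fun t => 0 < t < 1)
    (fun t => PSeries (PS_derive a) t / PSeries (PS_derive b) t).
Proof.
  apply PSeries_ratio_qconcave;
    [apply CV_radius_derive_ge_1, Ha|apply CV_radius_derive_ge_1, Hb|apply PS_derive_pos, Hbpos|].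
  intros i j k Hijk; rewrite !PS_derive_ratio by exact Hbpos.
  apply (qconcave_seq_unimodal _ m Hinc Hdec); lia.
Qed.

Lemma PSeries_H_qconcave : qconcave_on (fun t => 0 <= t < 1) (PSeries_H a b).
Proof.
  set (g' := fun t => (PSeries (PS_derive (PS_derive a)) t * PSeries (PS_derive b) t
                       - PSeries (PS_derive a) t * PSeries (PS_derive (PS_derive b)) t)
                      / PSeries (PS_derive b) t ^ 2).
  assert (Hdg : forall t, 0 <= t < 1 ->
            is_derive (fun s => PSeries (PS_derive a) s / PSeries (PS_derive b) s) t (g' t))
    by (intros t Ht; apply is_derive_PSeries_ratio;
        [apply CV_radius_derive_ge_1, Ha|apply CV_radius_derive_ge_1, Hb
        |apply PS_derive_pos, Hbpos|exact Ht]).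
  apply (qconcave_of_derive _ (fun t => g' t * PSeries b t)).
  - intros t Ht; apply is_derive_PSeries_H, Hdg; assumption.
  - intros s w Hs Hw Hhs.
    pose proof (PSeries_unit_pos b Hb Hbpos s ltac:(lra)).
    pose proof (PSeries_unit_pos b Hb Hbpos w ltac:(lra)).
    assert (g' w <= 0); [|nra].
    apply (derive_nonpos_of_qconcave
             (fun t => PSeries (PS_derive a) t / PSeries (PS_derive b) t) g' s w);
      [lra|apply Hdg; lra|apply Hdg; lra| |nra].
    intros x y z Hx Hz Hxyz; apply PSeries_derive_ratio_qconcave; lra.
Qed.

Lemma PSeries_H_0_nonneg : (1 <= m)%nat -> 0 <= PSeries_H a b 0.
Proof.
  intros Hm; unfold PSeries_H; rewrite !PSeries_0; unfold PS_derive; simpl INR.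
  specialize (Hinc 0%nat 1%nat ltac:(simpl; lia) Hm ltac:(lia)); simpl in Hinc.
  pose proof (Hbpos 0%nat); pose proof (Hbpos 1%nat).
  replace (1 * a 1%nat / (1 * b 1%nat) * b 0%nat - a 0%nat)
    with (b 0%nat * (a 1%nat / b 1%nat - a 0%nat / b 0%nat)) by (field; lra).
  apply Rmult_le_pos; lra.
Qed.

Theorem PSeries_ratio_nondecr_of_unimodal : (1 <= m)%nat ->
  (forall eps, 0 < eps -> at_left 1 (fun t => - eps < PSeries_H a b t)) ->
  forall u v, 0 < u <= v -> v < 1 ->
  PSeries a u / PSeries b u <= PSeries a v / PSeries b v.
Proof.
  intros Hm Hlim u v Huv Hv.
  apply (nondecr_of_is_derive (fun t => PSeries a t / PSeries b t)
           (fun t => (PSeries (PS_derive a) t * PSeries b t - PSeries a t * PSeries (PS_derive b) t)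
                     / PSeries b t ^ 2));
    [lra|intros c Hc; apply is_derive_PSeries_ratio; auto; lra|].
  intros c Hc.
  pose proof (PSeries_unit_pos b Hb Hbpos c ltac:(lra)).
  pose proof (PSeries_derive_unit_pos b Hb Hbpos c ltac:(lra)).
  pose proof (nonneg_of_qconcave _ 0 1 PSeries_H_qconcave (PSeries_H_0_nonneg Hm) Hlim c
                ltac:(lra)) as HH.
  unfold PSeries_H in HH.
  replace (PSeries (PS_derive a) c * PSeries b c - PSeries a c * PSeries (PS_derive b) c)
    with ((PSeries (PS_derive a) c / PSeries (PS_derive b) c * PSeries b c - PSeries a c)
          * PSeries (PS_derive b) c) by (field; lra).
  apply Rmult_le_pos; [nra|left; apply Rinv_0_lt_compat, pow_lt; assumption].
Qed.

End UnimodalRatio.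

(** * Laplace transforms *)

Lemma eventually_gt_of_filterlim_ge_0 {T : Type} (F : (T -> Prop) -> Prop) (f : T -> R) (l : Rbar) :
  filterlim f F (Rbar_locally l) -> Rbar_le 0 l ->
  forall eps, 0 < eps -> F (fun x => - eps < f x).
Proof.
  intros Hf Hl eps Heps.
  apply (Hf (fun y => Rbar_lt (- eps) y)), open_Rbar_gt'.
  destruct l as [l| |]; simpl in *; [lra|exact I|exact Hl].
Qed.

Lemma exp_opp_unit (x : R) : 0 < x -> 0 < exp (- x) < 1.
Proof.
  intros Hx; split; [apply exp_pos|].
  rewrite <- exp_0; apply exp_increasing; lra.
Qed.

Lemma exp_opp_le (x y : R) : x <= y -> exp (- y) <= exp (- x).
Proof.
  intros Hxy; destruct (Rle_lt_or_eq_dec x y Hxy) as [Hlt|<-]; [|right; reflexivity].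
  left; apply exp_increasing; lra.
Qed.

Lemma at_left_1_of_at_right_0 (P : R -> Prop) :
  at_right 0 (fun x => P (exp (- x))) -> at_left 1 P.
Proof.
  intros [d Hd].
  assert (Hed : 0 < exp (- d) < 1) by (apply exp_opp_unit, cond_pos).
  exists (mkposreal (1 - exp (- d)) ltac:(lra)); intros t Ht Ht1.
  apply Rabs_lt_between in Ht; unfold minus, plus, opp in Ht; simpl in Ht.
  assert (Hln1 : ln t < 0) by (rewrite <- ln_1; apply ln_increasing; lra).
  assert (Hlnd : - d < ln t) by (rewrite <- (ln_exp (- d)); apply ln_increasing; lra).
  replace t with (exp (- - ln t)) by (rewrite Ropp_involutive; apply exp_ln; lra).
  apply Hd; [|lra].
  apply Rabs_lt_between; unfold minus, plus, opp; simpl; lra.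
Qed.

Lemma exp_opp_mul_INR (k : nat) (x : R) : exp (- (INR k * x)) = exp (- x) ^ k.
Proof.
  induction k as [|k IH]; simpl pow.
  - rewrite Rmult_0_l, Ropp_0; apply exp_0.
  - rewrite S_INR, <- IH, <- exp_plus; f_equal; ring.
Qed.

Lemma LT_PSeries (a : nat -> R) (x : R) : LT a x = PSeries a (exp (- x)).
Proof. unfold LT, PSeries; apply Series_ext; intros n; rewrite exp_opp_mul_INR; reflexivity. Qed.

Lemma LT_opp (a : nat -> R) (x : R) : LT (PS_opp a) x = - LT a x.
Proof. rewrite !LT_PSeries; apply PSeries_opp. Qed.

Lemma Derive_LT (a : nat -> R) (x : R) : Rbar_le 1 (CV_radius a) -> 0 < x ->
  Derive (LT a) x = - exp (- x) * PSeries (PS_derive a) (exp (- x)).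
Proof.
  intros Ha Hx; pose proof (exp_opp_unit x Hx).
  apply is_derive_unique.
  apply (is_derive_ext (fun y => PSeries a (exp (- y)))); [intros y; symmetry; apply LT_PSeries|].
  apply (is_derive_comp (PSeries a) (fun y => exp (- y)));
    [apply is_derive_PSeries_unit; [exact Ha|lra]|].
  auto_derive; [exact I|ring].
Qed.

Lemma H_fun_LT (a b : nat -> R) (x : R) :
  Rbar_le 1 (CV_radius a) -> Rbar_le 1 (CV_radius b) -> 0 < x ->
  H_fun (LT a) (LT b) x = PSeries_H a b (exp (- x)).
Proof.
  intros Ha Hb Hx; unfold H_fun, PSeries_H.
  rewrite !Derive_LT, !LT_PSeries, Rdiv_mult_l_l
    by (assumption || (pose proof (exp_pos (- x)); lra)).
  reflexivity.
Qed.

Lemma H_fun_LT_opp (a b : nat -> R) (x : R) :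
  H_fun (LT (PS_opp a)) (LT b) x = - H_fun (LT a) (LT b) x.
Proof.
  unfold H_fun.
  rewrite (Derive_ext (LT (PS_opp a)) (fun y => - LT a y)) by (intros; apply LT_opp).
  rewrite Derive_opp, LT_opp; unfold Rdiv; ring.
Qed.

Theorem PSeries_ratio_nondecr (a b : nat -> R) :
  Rbar_le 1 (CV_radius a) -> Rbar_le 1 (CV_radius b) -> (forall k, 0 < b k) ->
  ( incr_on (fun k => a k / b k) (fun _ => True)
    \/ exists m : nat, (1 <= m)%nat /\
         incr_on (fun k => a k / b k) (fun k => (k <= m)%nat) /\
         decr_on (fun k => a k / b k) (fun k => (m <= k)%nat) /\
         exists l : Rbar, filterlim (H_fun (LT a) (LT b)) (at_right 0) (Rbar_locally l)
                          /\ Rbar_le 0 l ) ->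
  forall u v, 0 < u <= v -> v < 1 -> PSeries a u / PSeries b u <= PSeries a v / PSeries b v.
Proof.
  intros Ha Hb Hbpos [Hr|[m [Hm [Hinc [Hdec [l [Hl Hl0]]]]]]].
  - exact (PSeries_ratio_nondecr_of_incr a b Ha Hb Hbpos Hr).
  - apply (PSeries_ratio_nondecr_of_unimodal a b Ha Hb Hbpos m Hinc Hdec Hm).
    intros eps Heps; apply at_left_1_of_at_right_0.
    apply (filter_imp (fun x => - eps < H_fun (LT a) (LT b) x /\ 0 < x)).
    + intros x [Hx Hx0]; rewrite <- H_fun_LT by assumption; exact Hx.
    + apply filter_and; [exact (eventually_gt_of_filterlim_ge_0 _ _ l Hl Hl0 eps Heps)|].
      exists (mkposreal 1 Rlt_0_1); intros x _ Hx; exact Hx.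
Qed.

Lemma incr_on_opp_ratio (a b : nat -> R) (P : nat -> Prop) :
  decr_on (fun k => a k / b k) P -> incr_on (fun k => PS_opp a k / b k) P.
Proof.
  intros Hr i j Pi Pj Hij; specialize (Hr i j Pi Pj Hij).
  unfold PS_opp, opp; simpl; rewrite <- !Ropp_div_distr_l; lra.
Qed.

Lemma decr_on_opp_ratio (a b : nat -> R) (P : nat -> Prop) :
  incr_on (fun k => a k / b k) P -> decr_on (fun k => PS_opp a k / b k) P.
Proof.
  intros Hr i j Pi Pj Hij; specialize (Hr i j Pi Pj Hij).
  unfold PS_opp, opp; simpl; rewrite <- !Ropp_div_distr_l; lra.
Qed.

Lemma filterlim_H_fun_LT_opp (a b : nat -> R) (F : (R -> Prop) -> Prop) {FF : Filter F}
  (l : Rbar) :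
  filterlim (H_fun (LT a) (LT b)) F (Rbar_locally l) ->
  filterlim (H_fun (LT (PS_opp a)) (LT b)) F (Rbar_locally (Rbar_opp l)).
Proof.
  intros Hl.
  apply (filterlim_ext (fun x => - H_fun (LT a) (LT b) x));
    [intros x; symmetry; apply H_fun_LT_opp|].
  apply (filterlim_comp _ _ _ (H_fun (LT a) (LT b)) Ropp _ (Rbar_locally l));
    [exact Hl|apply filterlim_Rbar_opp].
Qed.

Corollary PSeries_ratio_nonincr (a b : nat -> R) :
  Rbar_le 1 (CV_radius a) -> Rbar_le 1 (CV_radius b) -> (forall k, 0 < b k) ->
  ( decr_on (fun k => a k / b k) (fun _ => True)
    \/ exists m : nat, (1 <= m)%nat /\
         decr_on (fun k => a k / b k) (fun k => (k <= m)%nat) /\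
         incr_on (fun k => a k / b k) (fun k => (m <= k)%nat) /\
         exists l : Rbar, filterlim (H_fun (LT a) (LT b)) (at_right 0) (Rbar_locally l)
                          /\ Rbar_le l 0 ) ->
  forall u v, 0 < u <= v -> v < 1 -> PSeries a v / PSeries b v <= PSeries a u / PSeries b u.
Proof.
  intros Ha Hb Hbpos Hcase u v Huv Hv.
  enough (Hopp : PSeries (PS_opp a) u / PSeries b u <= PSeries (PS_opp a) v / PSeries b v)
    by (rewrite !PSeries_opp, <- !Ropp_div_distr_l in Hopp; lra).
  apply PSeries_ratio_nondecr; [rewrite CV_radius_opp; exact Ha|exact Hb|exact Hbpos| |
                                 exact Huv|exact Hv].
  destruct Hcase as [Hr|[m [Hm [Hdec [Hinc [l [Hl Hl0]]]]]]];
    [left; apply incr_on_opp_ratio, Hr|right].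
  exists m; repeat split;
    [exact Hm|apply incr_on_opp_ratio, Hdec|apply decr_on_opp_ratio, Hinc|].
  exists (Rbar_opp l); split; [exact (filterlim_H_fun_LT_opp a b (at_right 0) l Hl)|].
  destruct l as [l| |]; simpl in *; [lra|exact Hl0|exact I].
Qed.

Lemma ex_pseries_pmf (p : nat -> R) (t : R) : pmf p -> 0 <= t <= 1 -> ex_pseries p t.
Proof.
  intros [Hp0 Hp1] Ht.
  apply CV_disk_correct, (CV_disk_le p t 1); [rewrite !Rabs_pos_eq; lra|].
  apply (ex_series_ext p); [|exists 1; exact Hp1].
  intros n; rewrite pow1, Rmult_1_r, Rabs_pos_eq; [reflexivity|apply Hp0].
Qed.

Lemma CV_radius_pmf (p : nat -> R) : pmf p -> Rbar_le 1 (CV_radius p).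
Proof. intros Hp; apply CV_radius_ge_1; intros t Ht; apply ex_pseries_pmf; [exact Hp|lra]. Qed.

Lemma PSeries_pmf_pos (p : nat -> R) (t : R) : pmf p -> 0 < t < 1 -> 0 < PSeries p t.
Proof.
  intros Hp Ht; pose proof Hp as [Hp0 Hp1].
  destruct (classic (exists k, 0 < p k)) as [[k Hk]|Hno].
  - apply (PSeries_gt_0 p k); [exact Hp0|exact Hk|lra|apply ex_pseries_pmf; [exact Hp|lra]].
  - exfalso; apply is_series_unique in Hp1.
    rewrite (Series_ext p (fun n => 0 * p n)), Series_scal_l in Hp1; [lra|].
    intros n; specialize (Hp0 n).
    assert (~ 0 < p n) by (intros Hn; apply Hno; exists n; exact Hn); nra.
Qed.

Lemma Ltr_le_of_PSeries_ratio_nondecr (p q : nat -> R) :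
  (forall u v, 0 < u <= v -> v < 1 -> PSeries p u / PSeries q u <= PSeries p v / PSeries q v) ->
  Ltr_le q p.
Proof.
  intros Hr x y Hx Hxy; rewrite !LT_PSeries.
  pose proof (exp_opp_unit x Hx); pose proof (exp_pos (- y)); pose proof (exp_opp_le x y Hxy).
  apply Hr; lra.
Qed.

Lemma Ltr_le_of_PSeries_ratio_nonincr (p q : nat -> R) : pmf p -> pmf q ->
  (forall u v, 0 < u <= v -> v < 1 -> PSeries p v / PSeries q v <= PSeries p u / PSeries q u) ->
  Ltr_le p q.
Proof.
  intros Hp Hq Hr x y Hx Hxy; rewrite !LT_PSeries.
  pose proof (exp_opp_unit x Hx); pose proof (exp_opp_unit y ltac:(lra)).
  pose proof (exp_opp_le x y Hxy).
  rewrite <- (Rinv_div (PSeries p (exp (- y)))), <- (Rinv_div (PSeries p (exp (- x)))).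
  apply Rinv_le_contravar; [|apply Hr; lra].
  apply Rdiv_lt_0_compat; apply PSeries_pmf_pos; assumption.
Qed.

Theorem theorem3 (p q : nat -> R) :
  pmf p -> pmf q -> (forall k, 0 < q k) ->
  let r := fun k => p k / q k in
  let H := H_fun (LT p) (LT q) in
  ( ( incr_on r (fun _ => True)
      \/ exists m : nat, (1 <= m)%nat /\
           incr_on r (fun k => (k <= m)%nat) /\ decr_on r (fun k => (m <= k)%nat) /\
           exists l : Rbar, filterlim H (at_right 0) (Rbar_locally l) /\ Rbar_le 0 l )
    -> Ltr_le q p )
  /\
  ( ( decr_on r (fun _ => True)
      \/ exists m : nat, (1 <= m)%nat /\
           decr_on r (fun k => (k <= m)%nat) /\ incr_on r (fun k => (m <= k)%nat) /\
           exists l : Rbar, filterlim H (at_right 0) (Rbar_locally l) /\ Rbar_le l 0 )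
    -> Ltr_le p q ).
Proof.
  intros Hp Hq Hqpos r H.
  pose proof (CV_radius_pmf p Hp); pose proof (CV_radius_pmf q Hq).
  split; intros Hcase.
  - apply Ltr_le_of_PSeries_ratio_nondecr, PSeries_ratio_nondecr; assumption.
  - apply Ltr_le_of_PSeries_ratio_nonincr, PSeries_ratio_nonincr; assumption.
Qed.
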